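(* Suppose the block size is infinite and let $r>0$. The solitary-or-posted-price mechanism with reserve price $r$ satisfies weak UIC, weak MIC, and $c$-weak-SCP for every integer $c\ge1$.
   Context: Setting (TFM). Each user $i$ has a true value $v_i\ge0$ and submits a single bid $b_i\ge0$. A TFM consists of an inclusion rule (run by the miner, choosing which bids to include; the block size is unbounded here) and confirmation, payment and miner-revenue rules (run by the blockchain on the included bids); the miner receives at most the total payment and the remainder is burnt. Solitary-or-posted-price mechanism with reserve $r$: include the two highest bids and every other bid that is at least $r$. Every included bid that is at least $r$ is confirmed, and the highest included bid is always confirmed (even if below $r$); all other bids are unconfirmed. Let $b_2$ be the second-highest included bid (taken to be $0$ if it does not exist). Every confirmed bid pays $\min(b_2,r)$; the miner is paid $\min(b_2,r)$; the remaining payment is burnt. Strategic players: a user, the miner, or the miner with some users; they may have users bid untruthfully after seeing all bids, inject fake bids (true value $0$), and (if the miner is involved) include any set of available bids. Weak ($1$-strict) utility: miner revenue (if the miner is in the player) plus $v-p$ for each confirmed transaction of the player (true value $v$, payment $p$), minus $(b-v)$ for each unconfirmed transaction of the player with bid $b>v$. Weak UIC: with an honest miner, each user's weak utility is maximized by truthful bidding without fake bids, whatever the other bids. Weak MIC: the miner's weak utility is maximized by honestly following the inclusion rule, whatever the bids. $c$-weak-SCP: for every coalition of the miner with between $1$ and $c$ users, joint weak utility is maximized by truthful bidding and honest miner behavior, whatever the other bids. *)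

From HB Require Import structures.
From mathcomp Require Import all_boot all_order all_algebra.
Set Implicit Arguments. Unset Strict Implicit. Unset Printing Implicit Defensive.
Import Order.TTheory GRing.Theory Num.Theory.
Local Open Scope ring_scope.

Section TFMs.
Variable R : realFieldType.

(* A transaction in the mempool: its bid, and [Some v] if it belongs to the
   strategic player (true value [v]; fake bids have true value 0), or [None]
   if it belongs to some other (non-strategic) user. *)
Definition tx := (R * option R)%type.

(* The inclusion rule sees the bids of the mempool (in order) and
   returns, for each position, whether the bid is included; the block is the
   included sub-list (in mempool order).  The blockchain rules see the bids of
   the block (in block order) and return, for each position of the block,
   (confirmed?, payment), and the miner revenue. *)
Record TFM := mkTFM {
  incl : seq R -> seq bool ;
  confpay : seq R -> seq (bool * R) ;
  minerRev : seq R -> R }.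

Definition rank (bs : seq R) (i : nat) : nat :=
  count (fun j => (nth 0 bs i < nth 0 bs j) || ((nth 0 bs j == nth 0 bs i) && (j < i)%N))
        (iota 0 (size bs)).

(* second-highest bid (0 if there are fewer than two bids) *)
Definition secondHighest (bs : seq R) : R :=
  nth 0 (sort (fun x y : R => y <= x) bs) 1.

Definition sop_price (r : R) (bs : seq R) : R := Num.min (secondHighest bs) r.

Definition sop_incl (r : R) (bs : seq R) : seq bool :=
  [seq (r <= nth 0 bs i) || (rank bs i < 2)%N | i <- iota 0 (size bs)].

Definition sop_confpay (r : R) (bs : seq R) : seq (bool * R) :=
  [seq let c := (r <= nth 0 bs i) || (rank bs i == 0)%N in
       (c, if c then sop_price r bs else 0) | i <- iota 0 (size bs)].

Definition sop (r : R) : TFM := mkTFM (sop_incl r) (sop_confpay r) (sop_price r).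

Definition txu (v b : R) (c : bool) (p : R) : R :=
  if c then v - p else - Num.max 0 (b - v).

Definition ownU (x : tx) (o : bool * R) : R :=
  if x.2 is Some v then txu v x.1 o.1 o.2 else 0.

(* weak utility of the player when [block] is the block and [rest] the
   non-included transactions; [miner] says whether the miner is in the player *)
Definition utility (M : TFM) (miner : bool) (block rest : seq tx) : R :=
  (if miner then minerRev M (map fst block) else 0)
  + \sum_(xo <- zip block (confpay M (map fst block))) ownU xo.1 xo.2
  + \sum_(x <- rest) ownU x (false, 0).

Definition honest (M : TFM) (mp : seq tx) : seq tx * seq tx :=
  let m := incl M (map fst mp) in (mask m mp, mask (map negb m) mp).

Definition honest_util (M : TFM) (miner : bool) (mp : seq tx) : R :=
  utility M miner (honest M mp).1 (honest M mp).2.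

Definition otherTx (others : seq R) : seq tx := [seq (b, None) | b <- others].
Definition fakeTx (fs : seq R) : seq tx := [seq (f, Some 0) | f <- fs].
Definition truthTx (vs : seq R) : seq tx := [seq (v, Some v) | v <- vs].
Definition nonneg (s : seq R) : bool := all (fun x => 0 <= x) s.

(* Weak UIC: honest miner; a user of value v bidding b and injecting fakes fs
   (mempool in any order) never beats truthful bidding. *)
Definition weak_UIC (M : TFM) : Prop :=
  forall (others : seq R) (v b : R) (fs : seq R) (M0 M1 : seq tx),
    nonneg others -> 0 <= v -> 0 <= b -> nonneg fs ->
    perm_eq M0 (otherTx others ++ [:: (v, Some v)]) ->
    perm_eq M1 (otherTx others ++ (b, Some v) :: fakeTx fs) ->
    honest_util M false M1 <= honest_util M false M0.

(* Weak MIC: the miner injects fakes fs and chooses any block (a sub-multiset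
   of the mempool, in any order). *)
Definition weak_MIC (M : TFM) : Prop :=
  forall (others fs : seq R) (M0 block rest : seq tx),
    nonneg others -> nonneg fs ->
    perm_eq M0 (otherTx others) ->
    perm_eq (block ++ rest) (otherTx others ++ fakeTx fs) ->
    utility M true block rest <= honest_util M true M0.

(* c-weak-SCP: coalition of the miner with k users, 1 <= k <= c, of values vs,
   bidding bs, injecting fakes fs, choosing any block. *)
Definition c_weak_SCP (M : TFM) (c : nat) : Prop :=
  forall (others vs bs fs : seq R) (M0 block rest : seq tx),
    (1 <= size vs <= c)%N -> size bs = size vs ->
    nonneg others -> nonneg vs -> nonneg bs -> nonneg fs ->
    perm_eq M0 (otherTx others ++ truthTx vs) ->
    perm_eq (block ++ rest)
      (otherTx others ++ [seq (bv.1, Some bv.2) | bv <- zip bs vs] ++ fakeTx fs) ->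
    utility M true block rest <= honest_util M true M0.

End TFMs.

From HB Require Import structures.
From mathcomp Require Import all_boot all_order all_algebra.
From mathcomp Require Import lra zify.
Set Implicit Arguments. Unset Strict Implicit. Unset Printing Implicit Defensive.
Import Order.TTheory GRing.Theory Num.Theory.
Local Open Scope ring_scope.

(* Let b2 be the second-highest true value and p = min(b2, r).  Under honest play the inclusion
   rule keeps the two highest bids, so the block's second-highest bid is b2, the price is p,
   and every confirmed truthful user has value at least p.
   A coalition with the miner earns the price of the block it builds.  If the block's
   second-highest bid reaches r the price is r, which beats p only if some coalition
   transaction of value below r bids at least r; that transaction is confirmed and pays r
   back.  Otherwise only the top bid is confirmed and the price is the block's second-highest
   bid s; if s exceeds b2, a coalition transaction overbids a value below s, and it either
   pays s or forfeits its overbid.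
   A lone user facing an honest miner gains only through its true transaction, and the price
   it then pays is at least p: some other bid is at least p, and so is its confirmed bid. *)

Section Counting.
Variable T : eqType.
Implicit Types (P Q : pred T) (s : seq T).

Lemma count_ge2 P s x y :
  x != y -> x \in s -> y \in s -> P x -> P y -> (2 <= count P s)%N.
Proof.
move=> neq_xy /splitPr[s1 s2]; rewrite mem_cat inE eq_sym (negbTE neq_xy) /=.
move=> ys Px Py; have : (0 < count P (s1 ++ s2))%N.
  by rewrite -has_count; apply/hasP; exists y; rewrite // mem_cat.
by rewrite !count_cat /= Px; lia.
Qed.

Lemma count_predI_in P Q s :
  ~~ has (predI P (predC Q)) s -> count P s = count (predI P Q) s.
Proof.
move/hasPn=> PQ; apply: eq_in_count => z /PQ /=.
by case: (P z); case: (Q z).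
Qed.

Lemma count_lt_witness P Q s :
  (count Q s < count P s)%N -> exists2 x, x \in s & P x && ~~ Q x.
Proof.
move=> lt_QP; apply/hasP/negPn/negP => /count_predI_in PQ.
by move: lt_QP; rewrite PQ ltnNge (@sub_count _ (predI P Q) Q) // => z /andP[].
Qed.

Lemma count_sub_lt P Q s : subpred Q P ->
  (exists2 x, x \in s & P x && ~~ Q x) -> (count Q s < count P s)%N.
Proof.
move=> QP [x xs /andP[Px nQx]].
rewrite -[count P s]size_filter -(count_predC Q) count_filter.
rewrite (@eq_count _ (predI Q P) Q) => [|z /=]; last by case Qz: (Q z); rewrite ?(QP _ Qz).
rewrite -[X in (X < _)%N]addn0 ltn_add2l count_filter -has_count.
by apply/hasP; exists x; rewrite //= Px nQx.
Qed.

Lemma count_ge2_split P Q s : (2 <= count P s)%N ->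
  (2 <= count (predI P Q) s)%N \/ exists2 x, x \in s & P x && ~~ Q x.
Proof.
case: (boolP (has (predI P (predC Q)) s)) => [/hasP[x xs Px] _|/count_predI_in <-];
  by [right; exists x | left].
Qed.

Lemma count_nth_iota x0 P s :
  count P s = count (fun k => P (nth x0 s k)) (iota 0 (size s)).
Proof. by rewrite -{1}(mkseq_nth x0 s) /mkseq count_map. Qed.

Lemma perm_mask_cat (m : bitseq) s :
  size m = size s -> perm_eq s (mask m s ++ mask (map negb m) s).
Proof.
elim: s m => [|x s IH] [|b m] //= [] /IH ps.
case: b => /=; first by rewrite perm_cons.
by rewrite perm_sym -[x :: mask _ _]cat1s perm_catCA perm_cons perm_sym.
Qed.

Lemma mem_maskP x0 (m : bitseq) s x :
  x \in mask m s -> exists2 i, (i < size s)%N & nth false m i /\ nth x0 s i = x.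
Proof.
elim: s m => [|y s IH] [|b m] //; rewrite mem_mask_cons.
case/orP=> [/andP[-> /eqP ->]|/IH[i ilt [mi si]]]; first by exists 0%N.
by exists i.+1.
Qed.

Lemma mem_mask_nth x0 (m : bitseq) s i :
  (i < size s)%N -> nth false m i -> nth x0 s i \in mask m s.
Proof.
elim: s m i => [|y s IH] [|b m] [|i] //= ilt mi; rewrite mem_mask_cons.
  by rewrite mi eqxx.
by rewrite (IH m i) ?orbT.
Qed.

End Counting.

Lemma mem_iota0 n i : (i \in iota 0 n) = (i < n)%N.
Proof. by rewrite mem_iota. Qed.

Lemma count_ge2_iota (P : pred nat) n i j :
  i != j -> (i < n)%N -> (j < n)%N -> P i -> P j -> (2 <= count P (iota 0 n))%N.
Proof. by move=> nij ilt jlt; apply: count_ge2 nij _ _; rewrite mem_iota0. Qed.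

Lemma count_mask_nth {T : Type} x0 (P : pred T) (m : bitseq) (s : seq T) :
  count P (mask m s) =
  count (fun k => nth false m k && P (nth x0 s k)) (iota 0 (size s)).
Proof.
elim: s m => [|x s IH] [|b m] //=.
  by rewrite (@eq_count _ _ pred0) ?count_pred0 // => k; rewrite nth_nil.
by rewrite (iotaDl 1 0) count_map -IH; case: b.
Qed.

Section SecondHighest.
Variable R : realFieldType.
Implicit Types (s t : seq R) (x : R).

Let geq_rel : rel R := fun x y => y <= x.

Let geq_total : total geq_rel.
Proof. by move=> x y; exact: le_total. Qed.

Let geq_trans : transitive geq_rel.
Proof. by move=> x y z /= yx zy; exact: le_trans zy yx. Qed.

Lemma secondHighest_ge0 {s} : nonneg s -> 0 <= secondHighest s.
Proof.
move=> /allP s_ge0; rewrite /secondHighest.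
case: (ltnP 1 (size (sort geq_rel s))) => [lt1|]; last by move/(nth_default 0) ->.
by apply: s_ge0; rewrite -(perm_mem (permEl (perm_sort geq_rel s))) mem_nth.
Qed.

Lemma secondHighest_perm s t : perm_eq s t -> secondHighest s = secondHighest t.
Proof.
move=> pst; rewrite /secondHighest; congr nth; apply/perm_sortP => //.
by move=> x y /andP[xy yx]; apply/le_anti; rewrite xy yx.
Qed.

Lemma le_secondHighest s x :
  0 < x -> (x <= secondHighest s) = (2 <= count (>= x) s)%N.
Proof.
move=> x_gt0; rewrite /secondHighest -(permP (permEl (perm_sort geq_rel s))).
have := sort_sorted geq_total s; case: (sort _ s) => [|a [|b t]] /=.
- by rewrite lt_geF.
- by rewrite lt_geF //; case: (x <= a).
move=> /andP[ba /(order_path_min geq_trans)/allP t_le_b].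
case: (leP x b) => [xb|bx]; first by rewrite (le_trans xb ba).
rewrite (@eq_in_count _ _ pred0) ?count_pred0 => [|z /t_le_b /= zb]; last first.
  by apply/negbTE; rewrite -ltNge; exact: le_lt_trans zb bx.
by rewrite addn0; case: (x <= a).
Qed.

Lemma secondHighest_le s t : nonneg t ->
  (forall x, 0 < x -> (2 <= count (>= x) s)%N -> (2 <= count (>= x) t)%N) ->
  secondHighest s <= secondHighest t.
Proof.
move=> t_ge0 st; case: (leP (secondHighest s) 0) => [s_le0|s_gt0].
  exact: le_trans s_le0 (secondHighest_ge0 t_ge0).
by rewrite le_secondHighest // st // -le_secondHighest.
Qed.

Lemma gt_secondHighest_eq s x y z : 0 < x -> secondHighest s < x ->
  y \in s -> z \in s -> x <= y -> x <= z -> y = z.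
Proof.
move=> x_gt0 sec_lt y_in z_in xy xz; apply/eqP/negPn/negP => yz.
by move: sec_lt; rewrite ltNge le_secondHighest // (count_ge2 yz).
Qed.

End SecondHighest.

Section Rank.
Variables (R : realFieldType) (bs : seq R).

Definition beats (j i : nat) :=
  (nth 0 bs i < nth 0 bs j) || ((nth 0 bs j == nth 0 bs i) && (j < i)%N).

Lemma rankE i : rank bs i = count (beats ^~ i) (iota 0 (size bs)).
Proof. by []. Qed.

Lemma beats_irr i : ~~ beats i i.
Proof. by rewrite /beats ltxx ltnn andbF. Qed.

Lemma beats_le j i : beats j i -> nth 0 bs i <= nth 0 bs j.
Proof. by case/orP=> [/ltW //|/andP[/eqP -> _]]. Qed.

Lemma beats_trans k j i : beats j i -> beats k j -> beats k i.
Proof.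
rewrite /beats => /orP[ij|/andP[/eqP ij ji]] /orP[jk|/andP[/eqP jk kj]].
- by rewrite (lt_trans ij jk).
- by rewrite jk ij.
- by rewrite -ij jk.
- by rewrite jk ij eqxx (ltn_trans kj ji) orbT.
Qed.

Lemma beats_total j i : j != i -> beats j i || beats i j.
Proof.
by rewrite /beats; case: (ltgtP (nth 0 bs i) (nth 0 bs j)) => //= _; rewrite -neq_ltn.
Qed.

Lemma beats_rank_lt j i :
  (j < size bs)%N -> beats j i -> (rank bs j < rank bs i)%N.
Proof.
move=> j_lt ji; rewrite !rankE; apply: count_sub_lt => [k kj|]; first exact: beats_trans ji kj.
by exists j; rewrite ?mem_iota0 //= ji beats_irr.
Qed.

Lemma rank0_max i j : rank bs i = 0%N -> (j < size bs)%N -> nth 0 bs j <= nth 0 bs i.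
Proof.
move=> rank_i j_lt; rewrite leNgt; apply/negP => ij.
suff : (0 < rank bs i)%N by rewrite rank_i.
by rewrite rankE -has_count; apply/hasP; exists j; rewrite ?mem_iota0 /beats ?ij.
Qed.

Lemma rank0_uniq i j : (i < size bs)%N -> (j < size bs)%N ->
  rank bs i = 0%N -> rank bs j = 0%N -> i = j.
Proof.
move=> i_lt j_lt rank_i rank_j; apply/eqP/negPn/negP => /beats_total/orP[].
- by move/(beats_rank_lt i_lt); rewrite rank_i rank_j.
- by move/(beats_rank_lt j_lt); rewrite rank_i rank_j.
Qed.

Lemma exists_rank0_ge i : (i < size bs)%N ->
  exists2 t, (t < size bs)%N & rank bs t = 0%N /\ nth 0 bs i <= nth 0 bs t.
Proof.
elim: {i}(rank bs i) {-2}i (leqnn (rank bs i)) => [|k IH] i.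
  by rewrite leqn0 => /eqP rank_i i_lt; exists i.
move=> rank_i i_lt; case: (posnP (rank bs i)) => [rank_i0|]; first by exists i.
rewrite rankE -has_count => /hasP[j]; rewrite mem_iota0 => j_lt ji.
have [|t t_lt [rank_t jt]] := IH j _ j_lt.
  by rewrite -ltnS; exact: leq_trans (beats_rank_lt j_lt ji) rank_i.
by exists t => //; split => //; exact: le_trans (beats_le ji) jt.
Qed.

Hypothesis bs_ge0 : nonneg bs.

Lemma gt_secondHighest_rank0 i : (i < size bs)%N ->
  secondHighest bs < nth 0 bs i -> rank bs i = 0%N.
Proof.
move=> i_lt sec_i; apply/eqP; rewrite -leqn0 leqNgt rankE -has_count.
apply/negP => /hasP[j]; rewrite mem_iota0 => j_lt ji.
have bi_gt0 : 0 < nth 0 bs i := le_lt_trans (secondHighest_ge0 bs_ge0) sec_i.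
suff : nth 0 bs i <= secondHighest bs by rewrite leNgt sec_i.
rewrite le_secondHighest // (count_nth_iota 0); apply: (count_ge2_iota (i := j) (j := i)) => //.
- by apply: contraTneq ji => ->; rewrite beats_irr.
- exact: beats_le ji.
Qed.

Lemma rank0_ge_secondHighest i : (i < size bs)%N -> rank bs i = 0%N ->
  secondHighest bs <= nth 0 bs i.
Proof.
move=> i_lt rank_i; rewrite leNgt; apply/negP => bi_lt.
have sec_gt0 : 0 < secondHighest bs.
  exact: le_lt_trans (allP bs_ge0 _ (mem_nth 0 i_lt)) bi_lt.
have : (0 < count (>= secondHighest bs) bs)%N by apply: ltnW; rewrite -le_secondHighest.
rewrite (count_nth_iota 0) -has_count => /hasP[j]; rewrite mem_iota0 => j_lt sec_j.
by have := rank0_max rank_i j_lt; rewrite leNgt (lt_le_trans bi_lt sec_j).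
Qed.

End Rank.

Section InclusionRule.
Variables (R : realFieldType) (r : R) (bs : seq R).

Lemma size_sop_incl : size (sop_incl r bs) = size bs.
Proof. by rewrite size_map size_iota. Qed.

Lemma nth_sop_incl k : (k < size bs)%N ->
  nth false (sop_incl r bs) k = (r <= nth 0 bs k) || (rank bs k < 2)%N.
Proof. by move=> k_lt; rewrite (nth_map 0%N) ?size_iota // nth_iota. Qed.

Lemma exists_included_ge y : y \in bs ->
  exists2 z, z \in mask (sop_incl r bs) bs & y <= z.
Proof.
move=> /(nthP 0)[i i_lt <-]; have [t t_lt [rank_t it]] := exists_rank0_ge i_lt.
by exists (nth 0 bs t) => //; apply: mem_mask_nth; rewrite // nth_sop_incl // rank_t orbT.
Qed.

(* An excluded bid is beaten by two others; following excluded ones up the ranking must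
   end at two included bids. *)
Lemma excluded_count_ge2 x i : (i < size bs)%N -> x <= nth 0 bs i ->
  ~~ nth false (sop_incl r bs) i ->
  (2 <= count (fun k => nth false (sop_incl r bs) k && (x <= nth 0 bs k)%R)
          (iota 0 (size bs)))%N.
Proof.
set m := sop_incl r bs.
elim: {i}(rank bs i) {-2}i (leqnn (rank bs i)) => [|k IH] i rank_i i_lt xi;
  rewrite nth_sop_incl // negb_or -leqNgt => /andP[_ rank_ge2].
  by have := leq_trans rank_ge2 rank_i.
move: rank_ge2; rewrite rankE => /(count_ge2_split (nth false m))[two|[j]].
  apply: leq_trans two _; apply: sub_count => j /andP[ji mj].
  by rewrite mj (le_trans xi (beats_le ji)).
rewrite mem_iota0 => j_lt /andP[ji mj]; apply: (IH j _ j_lt _ mj).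
- by rewrite -ltnS; exact: leq_trans (beats_rank_lt j_lt ji) rank_i.
- exact: le_trans xi (beats_le ji).
Qed.

Lemma secondHighest_sop_incl : nonneg bs ->
  secondHighest (mask (sop_incl r bs) bs) = secondHighest bs.
Proof.
move=> bs_ge0; apply/le_anti/andP; split.
  by apply: secondHighest_le => // x _ /leq_trans; apply; exact: leq_count_mask.
apply: secondHighest_le => [|x _]; first exact: all_mask.
rewrite (count_mask_nth 0) (count_nth_iota 0).
case/(count_ge2_split (nth false (sop_incl r bs))) => [two|[i]].
  by apply: leq_trans two _; apply: sub_count => k /andP[/= -> ->].
by rewrite mem_iota0 => i_lt /andP[xi ni]; exact: (excluded_count_ge2 i_lt xi ni).
Qed.

End InclusionRule.

Definition tx0 {R : realFieldType} : tx R := (0, None).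

Section Utility.
Variable R : realFieldType.
Implicit Types (r p : R) (bs : seq R) (e : tx R).

Definition sop_conf r bs k := (r <= nth 0 bs k) || (rank bs k == 0)%N.

Definition ownUc e (c : bool) p := ownU e (c, if c then p else 0).

Lemma utility_sop r miner (block rest : seq (tx R)) :
  utility (sop r) miner block rest =
  (if miner then sop_price r (map fst block) else 0)
  + \sum_(k < size block)
      ownUc (nth tx0 block k) (sop_conf r (map fst block) k) (sop_price r (map fst block))
  + \sum_(x <- rest) ownU x (false, 0).
Proof.
rewrite /utility /=; congr (_ + _ + _).
rewrite (big_nth (tx0, (false, 0))) /sop_confpay size_zip !size_map size_iota minnn.
rewrite big_mkord; apply: eq_bigr => k _.
by rewrite nth_zip ?size_map ?size_iota // (nth_map 0%N) ?size_iota ?size_map // nth_iota.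
Qed.

Lemma ownUc_unconfirmed_le0 e p : ownUc e false p <= 0.
Proof. by case: e => b [v|] //=; rewrite /ownUc /ownU /txu /= oppr_le0 le_max lexx. Qed.

Lemma unconfirmed_sum_le0 (rest : seq (tx R)) : \sum_(x <- rest) ownU x (false, 0) <= 0.
Proof. by apply: sumr_le0 => x _; exact: (ownUc_unconfirmed_le0 x 0). Qed.

Lemma sop_conf_gt_price r bs k : nonneg bs -> (k < size bs)%N ->
  sop_price r bs < nth 0 bs k -> sop_conf r bs k.
Proof.
move=> bs_ge0 k_lt; rewrite /sop_price /sop_conf gt_min => /orP[sec_k|/ltW -> //].
by rewrite gt_secondHighest_rank0 ?orbT.
Qed.

Lemma sop_incl_gt_price r bs k : nonneg bs -> (k < size bs)%N ->
  sop_price r bs < nth 0 bs k -> nth false (sop_incl r bs) k.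
Proof.
move=> bs_ge0 k_lt /(sop_conf_gt_price bs_ge0 k_lt).
by rewrite nth_sop_incl // /sop_conf => /orP[-> //|/eqP ->]; rewrite orbT.
Qed.

Lemma sop_conf_rank0 r bs k : nonneg bs -> (k < size bs)%N ->
  secondHighest bs < r -> sop_conf r bs k -> rank bs k = 0%N.
Proof.
move=> bs_ge0 k_lt sec_lt /orP[r_le|/eqP //].
exact: (gt_secondHighest_rank0 bs_ge0 k_lt (lt_le_trans sec_lt r_le)).
Qed.

End Utility.

Lemma ler_sum_except {R : realFieldType} n (f g : 'I_n -> R) (j : 'I_n) :
  (forall k, k != j -> f k <= g k) -> (forall k, 0 <= g k) ->
  \sum_(k < n) f k <= f j + \sum_(k < n) g k.
Proof.
move=> fg g_ge0; rewrite (bigD1 j) //= lerD2l.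
apply: le_trans (_ : \sum_(k < n | k != j) g k <= _); first exact: ler_sum.
by rewrite [X in _ <= X](bigD1 j) //= lerDr.
Qed.

Lemma ler_sum_term {R : realFieldType} n (f : 'I_n -> R) (j : 'I_n) :
  (forall k, 0 <= f k) -> f j <= \sum_(k < n) f k.
Proof. by move=> f_ge0; rewrite (bigD1 j) //= lerDl; exact: sumr_ge0. Qed.

Lemma map_fst_otherTx {R : realFieldType} (s : seq R) : map fst (otherTx s) = s.
Proof. by rewrite -map_comp map_id. Qed.

Lemma map_fst_truthTx {R : realFieldType} (s : seq R) : map fst (truthTx s) = s.
Proof. by rewrite -map_comp map_id. Qed.

Lemma nonneg_cat {R : realFieldType} (s t : seq R) :
  nonneg (s ++ t) = nonneg s && nonneg t.
Proof. exact: all_cat. Qed.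

Lemma sop_price_ge0 {R : realFieldType} (r : R) bs : 0 < r -> nonneg bs -> 0 <= sop_price r bs.
Proof. by move=> r_gt0 bs_ge0; rewrite le_min secondHighest_ge0 // ltW. Qed.

Lemma sop_price_le {R : realFieldType} (r : R) bs : sop_price r bs <= r.
Proof. by rewrite ge_min lexx orbT. Qed.

Section HonestOutcome.
Variables (R : realFieldType) (r : R) (others vs : seq R) (M0 : seq (tx R)).
Hypotheses (others_ge0 : nonneg others) (vs_ge0 : nonneg vs)
  (M0_perm : perm_eq M0 (otherTx others ++ truthTx vs)).

Local Notation p := (sop_price r (others ++ vs)).
Let m := sop_incl r (map fst M0).
Let B0 := mask m M0.
Let beta := map fst B0.

Let truthful_mem e : e \in M0 ->
  0 <= e.1 /\ (if e.2 is Some w then w = e.1 /\ w \in vs else True).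
Proof.
rewrite (perm_mem M0_perm) mem_cat => /orP[] /mapP[x x_in ->] /=.
  by split=> //; exact: (allP others_ge0).
by split=> //; exact: (allP vs_ge0).
Qed.

Let bids_perm : perm_eq (map fst M0) (others ++ vs).
Proof. by have := perm_map fst M0_perm; rewrite map_cat map_fst_otherTx map_fst_truthTx. Qed.

Let bids_ge0 : nonneg (map fst M0).
Proof. by rewrite /nonneg (perm_all _ bids_perm) all_cat; apply/andP. Qed.

Let beta_ge0 : nonneg beta.
Proof. by rewrite /beta map_mask; exact: all_mask. Qed.

Let size_m : size m = size M0.
Proof. by rewrite size_sop_incl size_map. Qed.

Lemma honest_price : sop_price r beta = p.
Proof.
rewrite /sop_price /beta map_mask secondHighest_sop_incl //.
by rewrite (secondHighest_perm bids_perm).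
Qed.

Let nth_beta k : (k < size B0)%N -> nth 0 beta k = (nth tx0 B0 k).1.
Proof. by move=> k_lt; rewrite (nth_map tx0). Qed.

Let nth_B0_mem k : (k < size B0)%N -> nth tx0 B0 k \in M0.
Proof. by move=> k_lt; apply: mem_mask (mem_nth _ k_lt). Qed.

(* A confirmed truthful bid is at least [r] or the highest one, hence at least the price. *)
Lemma honest_ownUc_ge0 k : (k < size B0)%N ->
  0 <= ownUc (nth tx0 B0 k) (sop_conf r beta k) p.
Proof.
move=> k_lt; have := nth_beta k_lt; have := truthful_mem (nth_B0_mem k_lt).
case: (nth tx0 B0 k) => b [w|] //= [_ [-> _]] beta_k.
case c: (sop_conf r beta k); rewrite /ownUc /ownU /txu /=; last by rewrite subrr maxxx oppr0.
rewrite subr_ge0; move: c; rewrite /sop_conf beta_k => /orP[|/eqP rank0].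
  exact: le_trans (sop_price_le _ _).
have := rank0_ge_secondHighest beta_ge0 _ rank0; rewrite size_map beta_k => /(_ k_lt).
by apply: le_trans; rewrite -honest_price ge_min lexx.
Qed.

Lemma honest_util_userE : honest_util (sop r) false M0 =
  \sum_(k < size B0) ownUc (nth tx0 B0 k) (sop_conf r beta k) p.
Proof.
rewrite /honest_util /honest /= utility_sop -/m -/B0 -/beta honest_price add0r.
rewrite [X in _ + X]big1_seq ?addr0 // => e /andP[_ /mem_mask/truthful_mem].
by case: e => b [w|] //= [_ [-> _]]; rewrite /ownU /txu /= subrr maxxx oppr0.
Qed.

Lemma honest_util_minerE :
  honest_util (sop r) true M0 = p + honest_util (sop r) false M0.
Proof. by rewrite /honest_util !utility_sop /= -/m -/B0 -/beta honest_price add0r addrA. Qed.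

Lemma honest_util_ge0 : 0 <= honest_util (sop r) false M0.
Proof.
by rewrite honest_util_userE; apply: sumr_ge0 => k _; exact: honest_ownUc_ge0.
Qed.

(* Every bid at least [r] is included and confirmed at price [p]. *)
Lemma honest_util_ge_posted :
  \sum_(v <- vs) (if r <= v then v - p else 0) <= honest_util (sop r) false M0.
Proof.
pose g (e : tx R) := if e.2 is Some v then (if r <= v then v - p else 0) else 0.
have -> : \sum_(v <- vs) (if r <= v then v - p else 0) = \sum_(e <- M0) g e.
  by rewrite (perm_big _ M0_perm) big_cat /= !big_map [X in _ = X + _]big1 // add0r.
rewrite (perm_big _ (perm_mask_cat size_m)) big_cat /= [X in _ + X]big1_seq ?addr0.
  rewrite honest_util_userE (big_nth tx0) big_mkord; apply: ler_sum => k _.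
  have := honest_ownUc_ge0 (ltn_ord k); have := nth_beta (ltn_ord k).
  have := truthful_mem (nth_B0_mem (ltn_ord k)); rewrite /g.
  case: (nth tx0 B0 k) => b [w|] //= [_ [-> _]] beta_k own_ge0.
  by case: ifP => // rb; rewrite /sop_conf beta_k rb.
move=> e /andP[_ /(mem_maskP tx0)[i i_lt [excl <-]]].
move: excl; rewrite (nth_map false) ?size_m // nth_sop_incl ?size_map //.
rewrite negb_or (nth_map tx0) // => /andP[r_gt _].
have := truthful_mem (mem_nth tx0 i_lt); rewrite /g.
by case: (nth tx0 M0 i) r_gt => b [w|] //= /negbTE r_gt [_ [-> _]]; rewrite r_gt.
Qed.

(* A truthful bid above the price is confirmed. *)
Lemma honest_util_ge_value v : v \in vs -> v - p <= honest_util (sop r) false M0.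
Proof.
move=> v_in; case: (leP v p) => [v_le_p|p_lt_v].
  by apply: le_trans honest_util_ge0; rewrite subr_le0.
have : (v, Some v) \in M0 by rewrite (perm_mem M0_perm) mem_cat map_f ?orbT.
case/(nthP tx0) => i i_lt M0_i.
have bids_i : nth 0 (map fst M0) i = v by rewrite (nth_map tx0) // M0_i.
have : (v, Some v) \in B0.
  rewrite -M0_i; apply: mem_mask_nth => //; apply: sop_incl_gt_price; rewrite ?size_map //.
  by rewrite bids_i /sop_price (secondHighest_perm bids_perm).
case/(nthP tx0) => k k_lt B0_k.
have conf_k : sop_conf r beta k.
  by apply: sop_conf_gt_price; rewrite ?size_map ?nth_beta ?B0_k ?honest_price.
rewrite honest_util_userE; apply: le_trans (ler_sum_term (Ordinal k_lt) _) => [|j].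
  by rewrite /= conf_k B0_k.
exact: honest_ownUc_ge0.
Qed.

End HonestOutcome.

Definition coalitionTx {R : realFieldType} (bs vs : seq R) : seq (tx R) :=
  [seq (bv.1, Some bv.2) | bv <- zip bs vs].

(* Non-strategic users bid truthfully. *)
Definition trueValue {R : realFieldType} (e : tx R) : R :=
  if e.2 is Some v then v else e.1.

Definition ownGain {R : realFieldType} (r : R) (e : tx R) : R :=
  if e.2 is Some v then Num.max 0 (v - r) else 0.

Lemma ownGain_ge0 {R : realFieldType} (r : R) e : 0 <= ownGain r e.
Proof. by rewrite /ownGain; case: e.2 => // v; rewrite le_max lexx. Qed.

Lemma ownUc_le_gain {R : realFieldType} (r : R) e c : ownUc e c r <= ownGain r e.
Proof.
case: e => b [v|] //; case: c; rewrite /ownUc /ownU /txu /ownGain /=.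
  by rewrite le_max lexx orbT.
by apply: (@le_trans _ _ 0); rewrite ?oppr_le0 le_max lexx.
Qed.

Section CoalitionDeviation.
Variables (R : realFieldType) (r : R) (others vs bs fs : seq R) (block rest : seq (tx R)).
Hypotheses (r_gt0 : 0 < r) (size_bs : size bs = size vs)
  (others_ge0 : nonneg others) (vs_ge0 : nonneg vs) (bs_ge0 : nonneg bs) (fs_ge0 : nonneg fs)
  (mempool_perm :
     perm_eq (block ++ rest) (otherTx others ++ coalitionTx bs vs ++ fakeTx fs)).

Local Notation p := (sop_price r (others ++ vs)).
Local Notation beta := (map fst block).
Local Notation n := (size block).

Let mempool_mem e : e \in block -> e \in otherTx others ++ coalitionTx bs vs ++ fakeTx fs.
Proof. by move=> e_in; rewrite -(perm_mem mempool_perm) mem_cat e_in. Qed.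

Lemma block_mem e : e \in block ->
  0 <= e.1 /\ (if e.2 is Some w then w \in vs \/ w = 0 else True).
Proof.
move/mempool_mem; rewrite !mem_cat => /or3P[] /mapP[x x_in ->] /=.
- by split=> //; exact: (allP others_ge0).
- split; [apply: (allP bs_ge0)|left].
    by rewrite -(@unzip1_zip _ _ bs vs) ?size_bs // (map_f fst x_in).
  by rewrite -(@unzip2_zip _ _ bs vs) ?size_bs // (map_f snd x_in).
- by split; [exact: (allP fs_ge0)|right].
Qed.

Lemma beta_ge0 : nonneg beta.
Proof. by apply/allP => b /mapP[e /block_mem[b_ge0 _] ->]. Qed.

Lemma block_count_trueValue x : 0 < x ->
  (count (fun e => (x <= trueValue e)%R) block <= count (>= x) (others ++ vs))%N.
Proof.
move=> x_gt0; apply: (@leq_trans (count (fun e => x <= trueValue e) (block ++ rest))).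
  by rewrite count_cat leq_addr.
rewrite (permP mempool_perm) !count_cat !count_map.
rewrite [X in (_ + (_ + X))%N](@eq_count _ _ pred0) ?count_pred0 ?addn0; last first.
  by move=> f; rewrite /= /trueValue /= lt_geF.
by rewrite -{2}(@unzip2_zip _ _ bs vs) ?size_bs // count_map.
Qed.

Lemma block_gain_sum :
  \sum_(e <- block) ownGain r e <= \sum_(v <- vs) Num.max 0 (v - r).
Proof.
suff <- : \sum_(e <- block ++ rest) ownGain r e = \sum_(v <- vs) Num.max 0 (v - r).
  by rewrite big_cat /= lerDl sumr_ge0 // => e _; exact: ownGain_ge0.
rewrite (perm_big _ mempool_perm) !big_cat /= !big_map big1 ?add0r //.
rewrite [X in _ + X]big1 ?addr0 => [|f _]; last by rewrite /ownGain /= sub0r max_l // oppr_le0 ltW.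
by rewrite -[X in _ = \sum_(v <- X) _](unzip2_zip (s := bs)) ?size_bs // big_map.
Qed.

(* The block has two bids at least [x], the mempool at most one true value at least [x]. *)
Lemma block_overbid x : 0 < x ->
  secondHighest (others ++ vs) < x -> x <= secondHighest beta ->
  exists2 k, (k < n)%N & exists b v, [/\ nth tx0 block k = (b, Some v), x <= b & v < x].
Proof.
move=> x_gt0 secT_lt x_le_secb.
have few : (count (fun e => (x <= trueValue e)%R) block < 2)%N.
  by apply: leq_ltn_trans (block_count_trueValue x_gt0) _; rewrite ltnNge -le_secondHighest -?ltNge.
have many : (2 <= count (>= x) beta)%N by rewrite -le_secondHighest.
move: few many; rewrite (count_nth_iota tx0) (count_nth_iota (0 : R)) size_map => few many.
have [k] := count_lt_witness (leq_trans few many).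
rewrite mem_iota0 => k_lt; rewrite /= (nth_map tx0) //.
case block_k: (nth tx0 block k) => [b [v|]] /= /andP[xb]; last by rewrite /trueValue /= xb.
by rewrite /trueValue /= -ltNge => vx; exists k => //; exists b, v.
Qed.

Let p_ge0 : 0 <= p.
Proof. by rewrite sop_price_ge0 // nonneg_cat others_ge0. Qed.

(* A second value above [r] would push [v] below the true second-highest value. *)
Let values_le_r v w : v \in vs -> p < v -> v < r -> w \in vs -> w <= r.
Proof.
move=> v_in p_lt_v v_lt_r w_in; rewrite leNgt; apply/negP => r_lt_w.
have secT_lt_v : secondHighest (others ++ vs) < v.
  by move: p_lt_v; rewrite /sop_price gt_min (lt_gtF v_lt_r) orbF.
have w_eq_v : w = v.
  apply: (gt_secondHighest_eq (le_lt_trans p_ge0 p_lt_v) secT_lt_v);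
    rewrite ?mem_cat ?w_in ?v_in ?orbT //.
  exact: ltW (lt_trans v_lt_r r_lt_w).
by move: r_lt_w; rewrite w_eq_v ltNge (ltW v_lt_r).
Qed.

Variable H : R.
Hypotheses (p_le_H : p <= H)
  (posted_le_H : p + \sum_(v <- vs) (if r <= v then v - p else 0) <= H)
  (values_le_H : forall v, v \in vs -> v <= H).

Let gains_le_H : p + \sum_(v <- vs) Num.max 0 (v - r) <= H.
Proof.
apply: le_trans posted_le_H; rewrite lerD2l; apply: ler_sum => v _.
have := sop_price_le r (others ++ vs); case: ifP => [rv|/negbT].
  by rewrite ge_max subr_ge0; lra.
by rewrite -ltNge ge_max lexx subr_le0 => /ltW.
Qed.

Let block_value_le k b v : (k < n)%N -> nth tx0 block k = (b, Some v) -> v <= H.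
Proof.
move=> k_lt block_k; have := block_mem (mem_nth tx0 k_lt); rewrite block_k /=.
by case=> _ [/values_le_H //|->]; apply: le_trans p_le_H.
Qed.

Lemma posted_deviation_le : r <= secondHighest beta ->
  r + \sum_(k < n) ownUc (nth tx0 block k) (sop_conf r beta k) r <= H.
Proof.
move=> r_le_secb; have := block_gain_sum; rewrite (big_nth tx0) big_mkord => gains.
have own_le : \sum_(k < n) ownUc (nth tx0 block k) (sop_conf r beta k) r
    <= \sum_(v <- vs) Num.max 0 (v - r).
  by apply: le_trans gains; apply: ler_sum => k _; exact: ownUc_le_gain.
case: (leP r (secondHighest (others ++ vs))) => [r_le_secT|secT_lt_r].
  by apply: le_trans gains_le_H; rewrite /sop_price (min_r r_le_secT) lerD2l.
have [j j_lt [b [v [block_j rb vr]]]] := block_overbid r_gt0 secT_lt_r r_le_secb.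
have conf_j : sop_conf r beta j by rewrite /sop_conf (nth_map tx0) // block_j /= rb.
apply: (@le_trans _ _ (v + \sum_(w <- vs) Num.max 0 (w - r))).
  apply: (@le_trans _ _ (r + (ownUc (nth tx0 block (Ordinal j_lt)) (sop_conf r beta j) r
                              + \sum_(k < n) ownGain r (nth tx0 block k)))).
    by rewrite lerD2l; apply: ler_sum_except => k; rewrite ?ownUc_le_gain ?ownGain_ge0.
  by rewrite /= conf_j block_j /ownUc /ownU /txu /=; lra.
case: (leP v p) => [v_le_p|p_lt_v]; first by apply: le_trans gains_le_H; rewrite lerD2r.
have := block_mem (mem_nth tx0 j_lt); rewrite block_j /= => -[_ [v_in|v0]]; last first.
  by move: p_lt_v; rewrite v0 ltNge p_ge0.
rewrite big1_seq ?addr0 ?values_le_H // => w /andP[_ w_in]; apply/max_l.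
by rewrite subr_le0 (values_le_r v_in _ vr).
Qed.

Lemma solitary_deviation_le : secondHighest beta < r ->
  secondHighest beta
  + \sum_(k < n) ownUc (nth tx0 block k) (sop_conf r beta k) (secondHighest beta) <= H.
Proof.
move=> secb_lt_r; set s := secondHighest beta.
set own := fun k : 'I_n => ownUc (nth tx0 block k) (sop_conf r beta k) s.
have conf_uniq (j k : 'I_n) : sop_conf r beta j -> sop_conf r beta k -> j = k.
  have lt_size (i : 'I_n) : (i < size beta)%N by rewrite size_map.
  move=> /(sop_conf_rank0 beta_ge0 (lt_size j) secb_lt_r) rank_j.
  move=> /(sop_conf_rank0 beta_ge0 (lt_size k) secb_lt_r) rank_k.
  exact/val_inj/(rank0_uniq (lt_size j) (lt_size k)).
case: (boolP [exists k : 'I_n, sop_conf r beta k && ((nth tx0 block k).2 != None)]).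
  case/existsP=> j /andP[conf_j]; case block_j: (nth tx0 block j) => [b [v|]] // _.
  apply: (@le_trans _ _ (s + (own j + \sum_(k < n) 0))).
    rewrite lerD2l; apply: ler_sum_except => // k k_neq_j.
    case conf_k: (sop_conf r beta k); last exact: ownUc_unconfirmed_le0.
    by move: k_neq_j; rewrite (conf_uniq _ _ conf_k conf_j) eqxx.
  rewrite big1 // addr0 /own conf_j block_j /ownUc /ownU /txu /= addrC subrK.
  exact: block_value_le block_j.
rewrite negb_exists => /forallP no_conf.
have own_le0 k : own k <= 0.
  rewrite /own; case conf_k: (sop_conf r beta k); last exact: ownUc_unconfirmed_le0.
  by move: (no_conf k); rewrite conf_k; case: (nth tx0 block k) => b [].
case: (leP s (secondHighest (others ++ vs))) => [s_le_secT|secT_lt_s].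
  apply: le_trans p_le_H; rewrite -[X in _ <= X]addr0; apply: lerD (sumr_le0 _ _).
    by rewrite le_min s_le_secT ltW.
  by move=> k _; exact: own_le0.
have s_gt0 : 0 < s.
  by apply: le_lt_trans secT_lt_s; rewrite secondHighest_ge0 // nonneg_cat others_ge0.
have [j j_lt [b [v [block_j sb vs_]]]] := block_overbid s_gt0 secT_lt_s (lexx s).
apply: (@le_trans _ _ (s + (own (Ordinal j_lt) + \sum_(k < n) 0))).
  by rewrite lerD2l; apply: ler_sum_except => // k _; exact: own_le0.
have := no_conf (Ordinal j_lt); rewrite /= block_j andbT => /negbTE conf_j.
rewrite big1 // addr0 /own /= conf_j block_j /ownUc /ownU /txu /=.
have : b - v <= Num.max 0 (b - v) by rewrite le_max lexx orbT.
have := block_value_le j_lt block_j; lra.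
Qed.

Lemma coalition_utility_le : utility (sop r) true block rest <= H.
Proof.
rewrite utility_sop -[H]addr0; apply: lerD (unconfirmed_sum_le0 rest).
case: (leP r (secondHighest beta)) => [r_le_secb|secb_lt_r]; rewrite /sop_price.
  by rewrite (min_r r_le_secb); exact: posted_deviation_le.
by rewrite (min_l (ltW secb_lt_r)); exact: solitary_deviation_le.
Qed.

End CoalitionDeviation.

Section UserDeviation.
Variables (R : realFieldType) (r : R) (others : seq R) (v b : R) (fs : seq R).
Variable M1 : seq (tx R).
Hypotheses (r_gt0 : 0 < r) (others_ge0 : nonneg others) (b_ge0 : 0 <= b)
  (fs_ge0 : nonneg fs) (M1_perm : perm_eq M1 (otherTx others ++ (b, Some v) :: fakeTx fs)).

Local Notation p := (sop_price r (others ++ [:: v])).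
Let bids := map fst M1.
Let B := mask (sop_incl r bids) M1.
Let beta := map fst B.
Let own (k : 'I_(size B)) := ownUc (nth tx0 B k) (sop_conf r beta k) (sop_price r beta).

Let M1_mem e : e \in M1 -> 0 <= e.1 /\ (if e.2 is Some w then w = v \/ w = 0 else True).
Proof.
rewrite (perm_mem M1_perm) mem_cat inE => /or3P[/mapP[o o_in ->]|/eqP ->|/mapP[f f_in ->]].
- by split=> //; exact: (allP others_ge0).
- by split=> //; left.
- by split; [exact: (allP fs_ge0)|right].
Qed.

Let bids_ge0 : nonneg bids.
Proof. by apply/allP => x /mapP[e /M1_mem[x_ge0 _] ->]. Qed.

Let beta_ge0 : nonneg beta.
Proof. by rewrite /beta map_mask; exact: all_mask. Qed.

Let nth_B_mem k : (k < size B)%N -> nth tx0 B k \in M1.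
Proof. by move=> k_lt; apply: mem_mask (mem_nth _ k_lt). Qed.

Let price_ge0 : 0 <= sop_price r beta.
Proof. exact: sop_price_ge0. Qed.

(* The confirmed true bid pays at least the truthful price: some other bid is at least [p],
   and so is the confirmed bid, so the second-highest bid is at least [p]. *)
Lemma user_price_ge k b' : (k < size B)%N -> nth tx0 B k = (b', Some v) ->
  sop_conf r beta k -> p <= sop_price r beta.
Proof.
move=> k_lt B_k conf_k; rewrite le_min sop_price_le andbT.
case: (leP p 0) => [p_le0|p_gt0]; first exact: le_trans p_le0 (secondHighest_ge0 beta_ge0).
have [o o_in po] : exists2 o, o \in others & p <= o.
  have : (2 <= count (>= p) (others ++ [:: v]))%N by rewrite -le_secondHighest // ge_min lexx.
  rewrite count_cat /= addn0 => two; have : (0 < count (>= p) others)%N.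
    by move: two; case: (p <= v) => /=; lia.
  by rewrite -has_count => /hasP[o o_in po]; exists o.
have o_bid : (o, None) \in M1 by rewrite (perm_mem M1_perm) mem_cat map_f.
have b'_ge_p : p <= b'.
  move: conf_k; rewrite /sop_conf (nth_map tx0) // B_k /=.
  case/orP=> [|/eqP rank0]; first exact: le_trans (sop_price_le _ _).
  have [z] := exists_included_ge r (map_f fst o_bid); rewrite -map_mask -/B -/beta.
  case/(nthP 0) => i i_lt <- oz.
  apply: le_trans po (le_trans oz _); have := rank0_max rank0 i_lt.
  by rewrite (nth_map tx0 _ _ k_lt) B_k.
rewrite /beta map_mask secondHighest_sop_incl // le_secondHighest // count_map.
apply: (count_ge2 (x := (o, None)) (y := (b', Some v))) => //.
  by rewrite xpair_eqE andbF.
by rewrite -B_k nth_B_mem.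
Qed.

Let user_gain_pos (k : 'I_(size B)) : 0 < own k ->
  exists b', [/\ nth tx0 B k = (b', Some v), sop_conf r beta k & v != 0].
Proof.
have := M1_mem (nth_B_mem (ltn_ord k)); rewrite /own.
case: (nth tx0 B k) => b' [w|] [_] //; last by rewrite ltxx.
case conf_k: (sop_conf r beta k); last by rewrite ltNge ownUc_unconfirmed_le0.
rewrite /ownUc /ownU /txu /= subr_gt0 => -[->|->] p_lt.
  by exists b'; rewrite gt_eqF // (le_lt_trans price_ge0 p_lt).
by move: price_ge0; rewrite leNgt p_lt.
Qed.

(* Only the true bid can gain, and it occurs once in the mempool. *)
Let user_gain_uniq (j k : 'I_(size B)) : 0 < own j -> 0 < own k -> j = k.
Proof.
move=> /user_gain_pos[bj [B_j _ v_neq0]] /user_gain_pos[bk [B_k _ _]].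
apply/val_inj/eqP/negPn/negP => j_neq_k.
have : (2 <= count (fun e => e.2 == Some v) B)%N.
  rewrite (count_nth_iota tx0); apply: (count_ge2_iota j_neq_k);
  by rewrite ?B_j ?B_k ?eqxx ?ltn_ord.
apply/negP; rewrite -ltnNge ltnS; apply: leq_trans (leq_count_mask _ _ _) _.
rewrite (permP M1_perm) count_cat /= eqxx !count_map.
rewrite !(@eq_count _ _ pred0) ?count_pred0 // => f /=.
by apply/negbTE; apply: contra v_neq0 => /eqP[<-].
Qed.

Lemma user_utility_le H : 0 <= H -> v - p <= H -> honest_util (sop r) false M1 <= H.
Proof.
move=> H_ge0 gain_le_H; rewrite /honest_util /honest /= utility_sop -/bids -/B -/beta add0r.
apply: (@le_trans _ _ (\sum_(k < size B) own k)); first by rewrite gerDl unconfirmed_sum_le0.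
case: (boolP [exists k, 0 < own k]) => [/existsP[j own_j]|]; last first.
  rewrite negb_exists => /forallP own_le0; apply: le_trans H_ge0.
  by apply: sumr_le0 => k _; rewrite leNgt own_le0.
apply: (@le_trans _ _ (own j + \sum_(k < size B) 0)).
  apply: ler_sum_except => // k k_neq_j; rewrite leNgt; apply/negP => own_k.
  by move: k_neq_j; rewrite (user_gain_uniq own_k own_j) eqxx.
have [b' [B_j conf_j _]] := user_gain_pos own_j.
rewrite big1 // addr0 /own B_j conf_j; apply: le_trans gain_le_H.
by rewrite /ownUc /ownU /txu /= lerD2l lerN2 (user_price_ge _ B_j).
Qed.

End UserDeviation.

Theorem mainTheorem7 (R : realFieldType) (r : R) :
  0 < r ->
  weak_UIC (sop r) /\ weak_MIC (sop r) /\
  (forall c : nat, (1 <= c)%N -> c_weak_SCP (sop r) c).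
Proof.
move=> r_gt0; split; [|split].
- move=> others v b fs M0 M1 others_ge0 v_ge0 b_ge0 fs_ge0 M0_perm M1_perm.
  have v_nonneg : nonneg [:: v] by rewrite /nonneg /= v_ge0.
  apply: (user_utility_le r_gt0 others_ge0 b_ge0 fs_ge0 M1_perm).
    exact: (honest_util_ge0 r others_ge0 v_nonneg M0_perm).
  by apply: (honest_util_ge_value r others_ge0 v_nonneg M0_perm); rewrite mem_seq1.
- move=> others fs M0 block rest others_ge0 fs_ge0 M0_perm mempool_perm.
  have nil_ge0 : nonneg (Nil R) by [].
  have M0_perm' : perm_eq M0 (otherTx others ++ truthTx [::]) by rewrite cats0.
  have honest_ge0 := honest_util_ge0 r others_ge0 nil_ge0 M0_perm'.
  rewrite (honest_util_minerE r others_ge0 nil_ge0 M0_perm').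
  apply: (@coalition_utility_le _ r others [::] [::] fs) => //; rewrite ?cats0 //.
  + by rewrite lerDl honest_ge0.
  + by rewrite big_nil addr0 lerDl honest_ge0.
- move=> c _ others vs bs fs M0 block rest _ size_bs others_ge0 vs_ge0 bs_ge0 fs_ge0.
  move=> M0_perm mempool_perm; rewrite (honest_util_minerE r others_ge0 vs_ge0 M0_perm).
  apply: (coalition_utility_le r_gt0 size_bs others_ge0 vs_ge0 bs_ge0 fs_ge0 mempool_perm).
  + by rewrite lerDl (honest_util_ge0 r others_ge0 vs_ge0 M0_perm).
  + by rewrite lerD2l (honest_util_ge_posted r others_ge0 vs_ge0 M0_perm).
  + by move=> v v_in; rewrite -lerBlDl (honest_util_ge_value r others_ge0 vs_ge0 M0_perm v_in).
Qed.
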